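(* Let $\phi\colon A_1\to A_2$ be a surjective morphism of $C^\infty$-rings and $I\le A_2$ an ideal. Then $\phi^{-1}(\sqrt[\infty]{I})=\sqrt[\infty]{\phi^{-1}(I)}$.
   Context: A $C^\infty$-ring is a product-preserving functor from the category of $\mathbb R^n$ ($n\ge0$) and smooth maps to sets; ideals are ideals of the underlying commutative $\mathbb R$-algebra; $A\{a^{-1}\}$ is the $C^\infty$-ring obtained by universally inverting $a$ among $C^\infty$-rings; $\sqrt[\infty]{I}:=\{f\in A\mid (A/I)\{f^{-1}\}\cong0\}$. *)

From HB Require Import structures.
From mathcomp Require Import all_boot all_order all_algebra.
From mathcomp Require Import all_classical all_reals all_analysis.
Set Implicit Arguments. Unset Strict Implicit. Unset Printing Implicit Defensive.
Import Order.TTheory GRing.Theory Num.Theory.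
Import numFieldNormedType.Exports.
Local Open Scope ring_scope.

Section Smooth.
Variable R : realType.

(* C^k functions R^n -> R, via iterated partial derivatives (continuity is
   required at every level; it is redundant for k >= 1 but harmless). *)
Fixpoint Ck (n k : nat) (g : 'rV[R]_n -> R) : Prop :=
  match k with
  | 0 => continuous g
  | k'.+1 => continuous g /\
      forall i : 'I_n, (forall x, derivable g x (delta_mx 0 i)) /\
        Ck k' (fun x => derive g x (delta_mx 0 i))
  end.

Definition smooth (n m : nat) (f : 'rV[R]_n -> 'rV[R]_m) : Prop :=
  forall (j : 'I_m) (k : nat), Ck k (fun x => f x 0 j).

Lemma Ck_cst n k (c : R) : Ck k (fun _ : 'rV[R]_n => c).
Proof.
elim: k c => [|k IH] c /=; first exact: cst_continuous.
split; first exact: cst_continuous.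
move=> i; split; first by move=> x; exact: (derivable_cst c).
have -> : (fun x => derive (fun _ : 'rV[R]_n => c) x (delta_mx 0 i)) = fun _ => 0.
  by apply/funext => x; exact: (derive_cst c).
exact: IH.
Qed.

Lemma Ck_coord n k (i : 'I_n) : Ck k (fun x : 'rV[R]_n => x 0 i).
Proof.
have cc : continuous (fun x : 'rV[R]_n => x 0 i) by exact: coord_continuous.
case: k => [|k] //=; split => // l; split.
  by move=> x; apply: diff_derivable; exact: differentiable_coord.
have @f : {linear 'rV[R]_n -> R}.
  by exists (fun N : 'rV[R]_n => N 0 i); do 2![eexists]; do ?[constructor];
     rewrite ?mxE// => ? *; rewrite ?mxE//; move=> ?; rewrite !mxE.
have -> : (fun x => derive (fun x0 : 'rV[R]_n => x0 0 i) x (delta_mx 0 l))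
          = fun _ => (delta_mx 0 l : 'rV[R]_n) 0 i.
  apply/funext => x.
  rewrite (_ : (fun x0 : 'rV[R]_n => x0 0 i) = f) //.
  have fc : continuous f by exact: (@coord_continuous R 1 n 0 i).
  rewrite deriveE; last exact: linear_differentiable.
  by rewrite diff_lin.
exact: Ck_cst.
Qed.

Lemma Ck_add n k (f g : 'rV[R]_n -> R) :
  Ck k f -> Ck k g -> Ck k (fun x => f x + g x).
Proof.
elim: k f g => [|k IH] f g /=.
  by move=> cf cg; by move=> x; exact: (continuousD (cf x) (cg x)).
move=> [cf df] [cg dg]; split; first by move=> x; exact: (continuousD (cf x) (cg x)).
move=> i; have [df1 df2] := df i; have [dg1 dg2] := dg i; split.
  by move=> x; exact: (derivableD (df1 x) (dg1 x)).
have -> : (fun x => derive (fun x0 => f x0 + g x0) x (delta_mx 0 i)) =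
   fun x => derive f x (delta_mx 0 i) + derive g x (delta_mx 0 i).
  by apply/funext => x; exact: (deriveD (df1 x) (dg1 x)).
exact: IH.
Qed.

Lemma Ck_mono n k (f : 'rV[R]_n -> R) : Ck k.+1 f -> Ck k f.
Proof.
elim: k f => [|k IH] f; first by case.
move=> [cf df]; split => // i; have [d1 d2] := df i; split => //.
exact: IH.
Qed.

Lemma Ck_mul n k (f g : 'rV[R]_n -> R) :
  Ck k f -> Ck k g -> Ck k (fun x => f x * g x).
Proof.
elim: k f g => [|k IH] f g /=.
  by move=> cf cg; by move=> x; exact: (continuousM (cf x) (cg x)).
move=> [cf df] [cg dg]; split; first by move=> x; exact: (continuousM (cf x) (cg x)).
move=> i; have [df1 df2] := df i; have [dg1 dg2] := dg i; split.
  by move=> x; exact: (derivableM (df1 x) (dg1 x)).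
have -> : (fun x => derive (fun x0 => f x0 * g x0) x (delta_mx 0 i)) =
   fun x => f x * derive g x (delta_mx 0 i) + g x * derive f x (delta_mx 0 i).
  by apply/funext => x; exact: (deriveM (df1 x) (dg1 x)).
apply: Ck_add; apply: IH => //; apply: Ck_mono; split => //.
Qed.

Definition proj_map (n : nat) (i : 'I_n) : 'rV[R]_n -> 'rV[R]_1 :=
  fun x => \row_(j < 1) x 0 i.
Definition add_map : 'rV[R]_2 -> 'rV[R]_1 :=
  fun x => \row_(j < 1) (x 0 ord0 + x 0 ord_max).
Definition mul_map : 'rV[R]_2 -> 'rV[R]_1 :=
  fun x => \row_(j < 1) (x 0 ord0 * x 0 ord_max).
Definition const_map (c : R) : 'rV[R]_0 -> 'rV[R]_1 :=
  fun _ => \row_(j < 1) c.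

Lemma smooth_proj n (i : 'I_n) : smooth (proj_map i).
Proof.
move=> j k; rewrite /proj_map.
have -> : (fun x : 'rV[R]_n => (\row_(j0 < 1) x 0 i) 0 j) = fun x => x 0 i.
  by apply/funext => x; rewrite mxE.
exact: Ck_coord.
Qed.

Lemma smooth_add : smooth add_map.
Proof.
move=> j k; rewrite /add_map.
have -> : (fun x : 'rV[R]_2 => (\row_(j0 < 1) (x 0 ord0 + x 0 ord_max)) 0 j)
  = fun x => x 0 ord0 + x 0 ord_max by apply/funext => x; rewrite mxE.
by apply: Ck_add; exact: Ck_coord.
Qed.

Lemma smooth_mul : smooth mul_map.
Proof.
move=> j k; rewrite /mul_map.
have -> : (fun x : 'rV[R]_2 => (\row_(j0 < 1) (x 0 ord0 * x 0 ord_max)) 0 j)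
  = fun x => x 0 ord0 * x 0 ord_max by apply/funext => x; rewrite mxE.
by apply: Ck_mul; exact: Ck_coord.
Qed.

Lemma smooth_const c : smooth (const_map c).
Proof.
move=> j k; rewrite /const_map.
have -> : (fun x : 'rV[R]_0 => (\row_(j0 < 1) c) 0 j) = fun _ => c
  by apply/funext => x; rewrite mxE.
exact: Ck_cst.
Qed.

End Smooth.

(* A C^oo-ring: a functor F from the category with objects R^n (n >= 0) and
   smooth maps to types, preserving finite products: F(R^n), with the maps
   F(pi_i) : F(R^n) -> F(R), is an n-fold product of F(R)
   (ctuple is the inverse of x |-> (F(pi_i) x)_i). *)
Record CinfRing (R : realType) := {
  cobj : nat -> Type;
  cmap : forall (n m : nat) (f : 'rV[R]_n -> 'rV[R]_m), smooth f -> cobj n -> cobj m;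
  cmap_id : forall n (h : smooth (fun x : 'rV[R]_n => x)) (x : cobj n),
      cmap h x = x;
  cmap_comp : forall n m p (f : 'rV[R]_n -> 'rV[R]_m) (g : 'rV[R]_m -> 'rV[R]_p)
      (hf : smooth f) (hg : smooth g) (hgf : smooth (fun x => g (f x))) (x : cobj n),
      cmap hgf x = cmap hg (cmap hf x);
  ctuple : forall n, ('I_n -> cobj 1) -> cobj n;
  ctupleK : forall n (x : cobj n),
      ctuple (fun i => cmap (@smooth_proj R _ i) x) = x;
  cprojK : forall n (a : 'I_n -> cobj 1) (i : 'I_n),
      cmap (@smooth_proj R _ i) (ctuple a) = a i
}.
Arguments cobj {R}.
Arguments cmap {R} _ {n m f} : rename.
Arguments ctuple {R} _ {n} : rename.

Record CinfMorph (R : realType) (A B : CinfRing R) := {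
  cfun : forall n, cobj A n -> cobj B n;
  mnat : forall n m (f : 'rV[R]_n -> 'rV[R]_m) (hf : smooth f) (x : cobj A n),
      cfun (cmap A hf x) = cmap B hf (cfun x)
}.
Arguments cfun {R A B} _ {n}.

Section Ops.
Variables (R : realType) (A : CinfRing R).

Definition empty_fun (T : Type) (i : 'I_0) : T :=
  False_rect T (notF (ltn_ord i)).

Definition pair2 (a b : cobj A 1) : 'I_2 -> cobj A 1 :=
  fun i => if i == ord0 then a else b.

Definition cadd (a b : cobj A 1) : cobj A 1 :=
  cmap A (@smooth_add R) (ctuple A (pair2 a b)).
Definition cmul (a b : cobj A 1) : cobj A 1 :=
  cmap A (@smooth_mul R) (ctuple A (pair2 a b)).
Definition cconst (c : R) : cobj A 1 :=
  cmap A (@smooth_const R c) (ctuple A (@empty_fun (cobj A 1))).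
Definition czero := cconst 0.
Definition cone := cconst 1.

Definition is_ideal (I : cobj A 1 -> Prop) : Prop :=
  [/\ I czero,
      (forall a b, I a -> I b -> I (cadd a b)) &
      (forall a b, I b -> I (cmul a b))].

Definition is_unit (a : cobj A 1) : Prop := exists b, cmul a b = cone.

(* A is isomorphic to the zero C^oo-ring (the terminal functor) *)
Definition ctrivial : Prop := forall n (x y : cobj A n), x = y.

End Ops.

(* C^oo-radical: f \in rad I  iff  (A/I){f^-1} = 0.
   (A/I){f^-1} is the initial C^oo-ring under A in which I maps to 0 and f
   becomes invertible; it is 0 iff every such C^oo-ring is 0. *)
Definition cinf_radical (R : realType) (A : CinfRing R) (I : cobj A 1 -> Prop)
    (f : cobj A 1) : Prop :=
  forall (B : CinfRing R) (psi : CinfMorph A B),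
    (forall a, I a -> cfun psi a = czero B) ->
    is_unit (cfun psi f) -> ctrivial B.

(* A morphism psi : A1 -> B killing phi^-1(I) kills ker phi, because 0 lies
   in I.  Subtraction is a smooth operation, so psi commutes with it and psi is
   constant on the fibres of phi: psi x = (psi x - psi y) + psi y
   = psi (x - y) + psi y = psi y.  Hence psi factors through the surjection
   phi as a morphism chi : A2 -> B killing I, with chi (phi a) = psi a.  So
   the morphisms out of A1 killing phi^-1(I) are exactly the composites of phi
   with the morphisms out of A2 killing I, and both radicals quantify over
   the same family of targets B. *)
From Pilot Require Import Defs.
From mathcomp Require Import all_boot all_order all_algebra.
From mathcomp Require Import all_classical all_reals all_analysis.
Set Implicit Arguments. Unset Strict Implicit. Unset Printing Implicit Defensive.
Import Order.TTheory GRing.Theory Num.Theory.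

Section CinfRingTheory.
Local Open Scope ring_scope.
Variable R : realType.

Lemma Ck_opp n k (g : 'rV[R]_n -> R) : Ck k g -> Ck k (fun x => - g x).
Proof.
move=> Cg; have -> : (fun x => - g x) = fun x => (-1) * g x.
  by apply/funext => x; rewrite mulN1r.
by apply: Ck_mul => //; exact: Ck_cst.
Qed.

Definition pair_map n (f g : 'rV[R]_n -> 'rV[R]_1) : 'rV[R]_n -> 'rV[R]_2 :=
  fun x => \row_j (if j == ord0 then f x 0 0 else g x 0 0).
Definition sub_map : 'rV[R]_2 -> 'rV[R]_1 :=
  fun x => \row_j (x 0 ord0 - x 0 ord_max).
Definition zero_map n : 'rV[R]_n -> 'rV[R]_1 := fun _ => 0.
Definition to_point_map n : 'rV[R]_n -> 'rV[R]_0 := fun _ => 0.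

Lemma smooth_id n : smooth (fun x : 'rV[R]_n => x).
Proof. by move=> j k; exact: Ck_coord. Qed.

Lemma smooth_pair n (f g : 'rV[R]_n -> 'rV[R]_1) :
  smooth f -> smooth g -> smooth (pair_map f g).
Proof.
move=> sf sg j k; rewrite /pair_map.
under eq_fun do rewrite mxE.
by case: (j == ord0); [exact: sf | exact: sg].
Qed.

Lemma smooth_sub : smooth sub_map.
Proof.
move=> j k; rewrite /sub_map; under eq_fun do rewrite mxE.
by apply: Ck_add; [exact: Ck_coord | apply: Ck_opp; exact: Ck_coord].
Qed.

Lemma smooth_zero n : smooth (@zero_map n).
Proof. by move=> j k; under eq_fun do rewrite mxE; exact: Ck_cst. Qed.

Lemma smooth_to_point n : smooth (@to_point_map n).
Proof. by case. Qed.

Section Ring.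
Variable A : CinfRing R.

Definition csub (a b : cobj A 1) : cobj A 1 :=
  cmap A smooth_sub (ctuple A (pair2 a b)).

Lemma cmap_compE n m p (f : 'rV[R]_n -> 'rV[R]_m) (g : 'rV[R]_m -> 'rV[R]_p)
    (h : 'rV[R]_n -> 'rV[R]_p) (sf : smooth f) (sg : smooth g) (sh : smooth h) x :
  (forall v, h v = g (f v)) -> cmap A sh x = cmap A sg (cmap A sf x).
Proof. by move/funext => eh; subst h; exact: cmap_comp. Qed.

Lemma cobj_ext n (u v : cobj A n) :
  (forall i, cmap A (smooth_proj R i) u = cmap A (smooth_proj R i) v) -> u = v.
Proof.
move=> euv; rewrite -(ctupleK u) -(ctupleK v); congr (ctuple A _).
exact/funext.
Qed.

Lemma cobj0_eq (u v : cobj A 0) : u = v.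
Proof. by apply: cobj_ext => -[]. Qed.

Lemma cmap_zero n (x : cobj A n) : cmap A (@smooth_zero n) x = Defs.czero A.
Proof.
rewrite /Defs.czero /cconst (@cmap_compE _ _ _ _ _ _ (@smooth_to_point n)
  (@smooth_const R 0)); first by congr (cmap A _ _); exact: cobj0_eq.
by move=> v; apply/rowP => j; rewrite !mxE.
Qed.

Lemma ctuple_pair2 n (f g : 'rV[R]_n -> 'rV[R]_1) (sf : smooth f)
    (sg : smooth g) (x : cobj A n) :
  ctuple A (pair2 (cmap A sf x) (cmap A sg x)) = cmap A (smooth_pair sf sg) x.
Proof.
apply: cobj_ext => i; rewrite cprojK /pair2.
by case: ifP => i0; apply: cmap_compE => v; apply/rowP => j;
   rewrite !mxE (ord1 j) i0.
Qed.

Lemma cmap_pair2 n (F : 'rV[R]_2 -> 'rV[R]_1) (f g h : 'rV[R]_n -> 'rV[R]_1)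
    (sF : smooth F) (sf : smooth f) (sg : smooth g) (sh : smooth h) x :
  (forall v, h v = F (pair_map f g v)) ->
  cmap A sF (ctuple A (pair2 (cmap A sf x) (cmap A sg x))) = cmap A sh x.
Proof.
by move=> eh; rewrite ctuple_pair2 (cmap_compE (smooth_pair sf sg) sF sh x eh).
Qed.

Lemma csubrK (a b : cobj A 1) : Defs.cadd (csub a b) b = a.
Proof.
set t := ctuple A (pair2 a b).
have ea : cmap A (smooth_proj R ord0) t = a by rewrite cprojK.
have eb : cmap A (smooth_proj R ord_max) t = b by rewrite cprojK.
rewrite -[in RHS]ea -[X in Defs.cadd _ X]eb /Defs.cadd /csub -/t.
by apply: cmap_pair2 => v; apply/rowP => j; rewrite !mxE /= subrK.
Qed.

Lemma cadd0r (b : cobj A 1) : Defs.cadd (Defs.czero A) b = b.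
Proof.
rewrite -(cmap_zero b) -{2 3}(cmap_id (@smooth_id 1) b) /Defs.cadd.
rewrite (cmap_pair2 _ _ _ (@smooth_id 1)) // => v.
by apply/rowP => j; rewrite !mxE (ord1 j) /= add0r.
Qed.

Lemma csubrr (a : cobj A 1) : csub a a = Defs.czero A.
Proof.
rewrite -(cmap_zero a) -{1 2}(cmap_id (@smooth_id 1) a) /csub.
rewrite (cmap_pair2 _ _ _ (@smooth_zero 1)) // => v.
by apply/rowP => j; rewrite !mxE /= subrr.
Qed.

End Ring.

Section Morphism.
Variables (A B : CinfRing R) (psi : CinfMorph A B).

Lemma cfun_ctuple n (u : 'I_n -> cobj A 1) :
  cfun psi (ctuple A u) = ctuple B (fun i => cfun psi (u i)).
Proof. by apply: cobj_ext => i; rewrite -mnat !cprojK. Qed.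

Lemma cfun_csub (a b : cobj A 1) :
  cfun psi (csub a b) = csub (cfun psi a) (cfun psi b).
Proof.
rewrite /csub mnat cfun_ctuple; congr (cmap B _ (ctuple B _)).
by apply/funext => i; rewrite /pair2; case: ifP.
Qed.

Definition cmorph_comp (C : CinfRing R) (chi : CinfMorph B C) : CinfMorph A C.
Proof.
exists (fun n x => cfun chi (cfun psi x)).
by move=> n m f sf x; rewrite !mnat.
Defined.

Lemma cfun_surj :
  (forall b : cobj B 1, exists a, cfun psi a = b) ->
  forall n (b : cobj B n), exists a, cfun psi a = b.
Proof.
move=> surj1 n b.
have /choice [f ef] : forall i, exists a, cfun psi a = cmap B (smooth_proj R i) b.
  by move=> i; exact: surj1.
by exists (ctuple A f); apply: cobj_ext => i; rewrite -mnat cprojK ef.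
Qed.

End Morphism.

Section Factorization.
Variables (A1 A2 B : CinfRing R) (phi : CinfMorph A1 A2) (psi : CinfMorph A1 B).
Hypothesis ker_sub : forall a, cfun phi a = Defs.czero A2 -> cfun psi a = Defs.czero B.

Lemma fiber_cfun_eq1 (x y : cobj A1 1) :
  cfun phi x = cfun phi y -> cfun psi x = cfun psi y.
Proof.
move=> exy.
have psi_sub : cfun psi (csub x y) = Defs.czero B.
  by apply: ker_sub; rewrite cfun_csub exy csubrr.
by rewrite -(csubrK (cfun psi x) (cfun psi y)) -cfun_csub psi_sub cadd0r.
Qed.

Lemma fiber_cfun_eq n (x y : cobj A1 n) :
  cfun phi x = cfun phi y -> cfun psi x = cfun psi y.
Proof.
move=> exy; apply: cobj_ext => i; rewrite -!mnat.
by apply: fiber_cfun_eq1; rewrite !mnat exy.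
Qed.

Lemma surj_factor :
  (forall b : cobj A2 1, exists a, cfun phi a = b) ->
  exists chi : CinfMorph A2 B,
    forall n (a : cobj A1 n), cfun chi (cfun phi a) = cfun psi a.
Proof.
move=> surj1.
pose pre n (b : cobj A2 n) := sval (cid (cfun_surj surj1 b)).
have preK n (b : cobj A2 n) : cfun phi (pre n b) = b by rewrite /pre; case: cid.
have chi_nat n m (f : 'rV[R]_n -> 'rV[R]_m) (sf : smooth f) b :
    cfun psi (pre m (cmap A2 sf b)) = cmap B sf (cfun psi (pre n b)).
  by rewrite -mnat; apply: fiber_cfun_eq; rewrite mnat !preK.
exists (Build_CinfMorph chi_nat) => n a /=.
by apply: fiber_cfun_eq; rewrite preK.
Qed.

End Factorization.

End CinfRingTheory.

Theorem lemma2p6 (R : realType) (A1 A2 : CinfRing R) (phi : CinfMorph A1 A2) :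
  (forall b : cobj A2 1, exists a : cobj A1 1, cfun phi a = b) ->
  forall I : cobj A2 1 -> Prop, is_ideal I ->
  forall a : cobj A1 1,
    cinf_radical I (cfun phi a) <-> cinf_radical (fun x => I (cfun phi x)) a.
Proof.
move=> surj I [I0 _ _] a; split=> [rad2 B psi psiI psi_a | rad1 B chi chiI chi_a].
- have ker_sub x : cfun phi x = Defs.czero A2 -> cfun psi x = Defs.czero B.
    by move=> phix0; apply: psiI; rewrite phix0.
  have [chi chi_phi] := surj_factor ker_sub surj.
  apply: (rad2 B chi); last by rewrite chi_phi.
  move=> b; have [x <-] := surj b.
  by rewrite chi_phi; exact: psiI.
- by apply: (rad1 B (cmorph_comp phi chi)) => // x; exact: chiI.
Qed.
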